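(* Let $g = 9.8$ and for $d \ge -\frac{(0.48g)^2}{0.8g}$ let $U(d) = 0.48g - \sqrt{(0.48g)^2 + 0.8 g d}$, so that for $d_0\ge 0$, $U'(d_0) = -\frac{0.4g}{\sqrt{(0.48g)^2+0.8gd_0}}$. Fix $\epsilon > 0$ and $d_0 \ge 0$. Define the surrogate red constraints on a pair $(d,v)\in\mathbb{R}^2$ by $$ v \le -\epsilon, \qquad v \le U'(d_0)(d - d_0) + U(d_0) - \epsilon. $$ Then: (i) (Tightness) every pair $(d,v)\in\mathbb{R}^2$ satisfying both surrogate constraints satisfies the red condition, i.e. $v<0$ and $d \le -1.2v + \frac{v^2}{0.8g}$; equivalently, $F(x) = \text{red}$ for every state $x$ whose driving-direction distance and velocity components are $(d,v)$. (ii) (Convexity) Consider the attack optimization in the context below in which the desired light is red at every step of the attack interval. If, for every $t$ in the attack interval, the constraint $F(\tilde x_t) = \text{red}$ is replaced by the two surrogate constraints applied to $(d,v) = (\tilde d_t^{1}, \tilde v_t^{1})$, the driving-direction distance and velocity components of $\tilde x_t$, then the resulting optimization problem in the variables $\{\delta_t\}_{t\in\mathcal{T}^a}$ is a convex optimization problem.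
   Context: FCW alert logic. For a state $x = (d^1, v^1, a^1, d^2, v^2, a^2)\in\mathbb{R}^6$ (distance, velocity, acceleration of the tracked object in the driving direction, then the same in the lateral direction), with safe distance $d^*(v) = -1.2v + v^2/(0.8g)$, $g=9.8$, the warning light is $F(x)=\text{green}$ if $v^1\ge 0$; $F(x)=\text{yellow}$ if $v^1<0$ and $d^1 > d^*(v^1)$; $F(x)=\text{red}$ if $v^1<0$ and $d^1\le d^*(v^1)$. Attack optimization. Fixed data: a state-transition matrix $A\in\mathbb{R}^{6\times 6}$, a measurement matrix $C\in\mathbb{R}^{8\times 6}$, Kalman gain matrices $H_{t}\in\mathbb{R}^{6\times 8}$ (computed independently of measurements), a finite interval of integer time steps $\mathcal{T}^a = \{t_0, \dots, t_1\}$, a fixed initial prediction $\tilde x_{t_0-1}\in\mathbb{R}^6$, measurements $y_t \in \mathbb{R}^8$ for $t\in\mathcal{T}^a$ (components 1–4 are vision measurements of driving-direction distance, driving-direction velocity, lateral distance, lateral velocity; components 5–8 the same from radar), a positive definite matrix $R\in\mathbb{R}^{8\times 8}$, and a bound $\Delta\in(0,\infty]$. The decision variables are $\delta_t\in\mathbb{R}^8$, $t\in\mathcal{T}^a$. The problem is: minimize $\sum_{t\in\mathcal{T}^a}\delta_t^\top R\delta_t$ subject to, for all $t\in\mathcal{T}^a$: $\tilde y_t = y_t + \delta_t$; $\tilde x_t = A(I - H_{t-1}C)\tilde x_{t-1} + A H_{t-1}\tilde y_t$; $\delta_t^i = 0$ for $i\in\{5,6,7,8\}$; $\|\delta_t\|_\infty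 \le \Delta$; the first component of $\tilde y_t$ lies in $[0,75]$ and the second in $[-30,30]$; and $F(\tilde x_t) = \text{red}$. *)

From HB Require Import structures.
From mathcomp Require Import all_boot all_order all_algebra.
Set Implicit Arguments. Unset Strict Implicit. Unset Printing Implicit Defensive.
Import Order.TTheory GRing.Theory Num.Theory.
Local Open Scope ring_scope.

Section FCW.
Variable R : rcfType.

Definition grav : R := 98%:R / 10%:R.

Definition dstar (v : R) : R := - (12%:R / 10%:R) * v + v ^+ 2 / ((8%:R / 10%:R) * grav).

Inductive light := Green | Yellow | Red.

(* state x = (d1, v1, a1, d2, v2, a2) as a column vector; components 1..6 are
   indices 0..5 *)
Definition F (x : 'cV[R]_6) : light :=
  let d1 := x 0 0 in
  let v1 := x 1 0 in
  if 0 <= v1 then Green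
  else if dstar v1 < d1 then Yellow else Red.

Definition red_cond (d v : R) : Prop := v < 0 /\ d <= dstar v.

Definition c48 : R := (48%:R / 100%:R) * grav.
Definition U (d : R) : R := c48 - Num.sqrt (c48 ^+ 2 + (8%:R / 10%:R) * grav * d).
Definition Uprime (d0 : R) : R :=
  - ((4%:R / 10%:R) * grav) / Num.sqrt (c48 ^+ 2 + (8%:R / 10%:R) * grav * d0).

Definition surrogate (eps d0 d v : R) : Prop :=
  v <= - eps /\ v <= Uprime d0 * (d - d0) + U d0 - eps.

(* positive definite (no symmetry assumed) *)
Definition posdef (n : nat) (M : 'M[R]_n) : Prop :=
  forall u : 'cV[R]_n, u != 0 -> 0 < (u^T *m M *m u) 0 0.

Definition inf_norm (n : nat) (u : 'cV[R]_n) : R := \big[Num.max/0]_(j < n) `|u j 0|.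

(* Attack interval T^a = {t0, ..., t0 + N - 1}; the decision variable
   delta : 'I_N -> 'cV_8 has delta k = delta_{t0+k}.  y k = y_{t0+k},
   H k = H_{t0-1+k}, x0 = tilde x_{t0-1}. *)
Definition ext (N : nat) (delta : 'I_N -> 'cV[R]_8) (k : nat) : 'cV[R]_8 :=
  match (insub k : option 'I_N) with
  | Some i => delta i
  | None => 0
  end.

(* traj k = tilde x_{t0-1+k}, so tilde x_{t0+k} = traj (k+1) *)
Fixpoint traj (A : 'M[R]_6) (C : 'M[R]_(8,6)) (H : nat -> 'M[R]_(6,8))
  (x0 : 'cV[R]_6) (y : nat -> 'cV[R]_8) (N : nat) (delta : 'I_N -> 'cV[R]_8)
  (k : nat) : 'cV[R]_6 :=
  match k with
  | 0 => x0
  | k'.+1 => A *m (1%:M - H k' *m C) *m traj A C H x0 y delta k'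
             + A *m H k' *m (y k' + ext delta k')
  end.

Definition objective (N : nat) (Rm : 'M[R]_8) (delta : 'I_N -> 'cV[R]_8) : R :=
  \sum_(i < N) ((delta i)^T *m Rm *m delta i) 0 0.

(* feasible set of the surrogate (red at every step) problem;
   Delta = None encodes Delta = +infinity *)
Definition surrogate_feasible (A : 'M[R]_6) (C : 'M[R]_(8,6)) (H : nat -> 'M[R]_(6,8))
  (x0 : 'cV[R]_6) (y : nat -> 'cV[R]_8) (Delta : option R) (eps d0 : R)
  (N : nat) (delta : 'I_N -> 'cV[R]_8) : Prop :=
  forall i : 'I_N,
    let yt := y i + delta i in
    let xt := traj A C H x0 y delta i.+1 in
    [/\ (forall j : 'I_8, (4 <= j)%N -> delta i j 0 = 0),
        (match Delta with Some D => inf_norm (delta i) <= D | None => True end),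
        0 <= yt 0 0 <= 75%:R,
        - 30%:R <= yt 1 0 <= 30%:R &
        surrogate eps d0 (xt 0 0) (xt 1 0)].

Definition convex_problem (I : Type) (n : nat) (J : (I -> 'cV[R]_n) -> R)
  (S : (I -> 'cV[R]_n) -> Prop) : Prop :=
  (forall (u w : I -> 'cV[R]_n) (l : R), 0 <= l <= 1 -> S u -> S w ->
     S (fun i => l *: u i + (1 - l) *: w i)) /\
  (forall (u w : I -> 'cV[R]_n) (l : R), 0 <= l <= 1 ->
     J (fun i => l *: u i + (1 - l) *: w i) <= l * J u + (1 - l) * J w).

End FCW.

From HB Require Import structures.
From mathcomp Require Import all_boot all_order all_algebra.
From mathcomp Require Import ring lra.
Set Implicit Arguments. Unset Strict Implicit. Unset Printing Implicit Defensive.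
Import Order.TTheory GRing.Theory Num.Theory.
Local Open Scope ring_scope.

(** With [c = 0.48 g] and [k = 0.8 g] one has [1.2 = 2c/k], so the red
    condition reads [k d <= v^2 - 2 c v]; its boundary is the graph of the
    concave function [U], and the surrogate half-plane lies below the tangent
    of [U] at [d0], hence inside the red region.  For convexity, the filter
    recursion makes every [tilde x_t] an affine function of the attack
    [delta], all constraints are convex sets pulled back along affine maps,
    and the objective is a positive semidefinite quadratic form. *)

Section ConvexCombination.
Variable R : realDomainType.

Lemma ler_convex_comb (l x1 x2 y1 y2 : R) : 0 <= l <= 1 ->
  x1 <= y1 -> x2 <= y2 -> l * x1 + (1 - l) * x2 <= l * y1 + (1 - l) * y2.
Proof.
move=> /andP[l0 l1] le1 le2.
by rewrite lerD // ler_wpM2l // subr_ge0.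
Qed.

Lemma convex_combxx (l x : R) : l * x + (1 - l) * x = x.
Proof. by ring. Qed.

Lemma convex_comb_le (l x1 x2 y : R) : 0 <= l <= 1 ->
  x1 <= y -> x2 <= y -> l * x1 + (1 - l) * x2 <= y.
Proof. by move=> l01 le1 le2; rewrite -(convex_combxx l y) ler_convex_comb. Qed.

Lemma convex_comb_ge (l x1 x2 y : R) : 0 <= l <= 1 ->
  y <= x1 -> y <= x2 -> y <= l * x1 + (1 - l) * x2.
Proof. by move=> l01 le1 le2; rewrite -(convex_combxx l y) ler_convex_comb. Qed.

Lemma convex_comb_itv (l a b x1 x2 : R) : 0 <= l <= 1 ->
  a <= x1 <= b -> a <= x2 <= b -> a <= l * x1 + (1 - l) * x2 <= b.
Proof.
move=> l01 /andP[a_x1 x1_b] /andP[a_x2 x2_b].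
by rewrite convex_comb_ge ?convex_comb_le.
Qed.

End ConvexCombination.

Lemma parabola_le_of_tangent (R : realFieldType) (c k s e d0 d v : R) :
  0 < k -> 0 < s -> s ^+ 2 = c ^+ 2 + k * d0 -> 0 <= e ->
  v <= - (k / 2) / s * (d - d0) + (c - s) - e -> k * d <= v ^+ 2 - 2 * c * v.
Proof.
move=> k0 s0 sE e0 hv.
have sv : s * v <= - (k / 2) * (d - d0) + s * (c - s - e).
  have -> : - (k / 2) * (d - d0) + s * (c - s - e)
          = s * (- (k / 2) / s * (d - d0) + (c - s) - e).
    by field; rewrite gt_eqF.
  by rewrite ler_wpM2l // ltW.
(* [v^2 - 2cv - kd] is [(v + s - c)^2 + 2se] plus twice the slack of [sv]. *)
have sq : 0 <= (v + s - c) ^+ 2 by apply: sqr_ge0.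
have se : 0 <= s * e by rewrite mulr_ge0 // ltW.
nra.
Qed.

Section Tightness.
Variable R : rcfType.

Local Notation kg := ((8%:R / 10%:R) * grav R).

Lemma grav_gt0 : 0 < grav R.
Proof. by rewrite /grav divr_gt0 ?ltr0n. Qed.

Lemma c48_gt0 : 0 < c48 R.
Proof. by rewrite /c48 mulr_gt0 ?grav_gt0 // divr_gt0 ?ltr0n. Qed.

Lemma kg_gt0 : 0 < kg.
Proof. by rewrite mulr_gt0 ?grav_gt0 // divr_gt0 ?ltr0n. Qed.

Lemma dstarE (v : R) : dstar v = (v ^+ 2 - 2 * c48 R * v) / kg.
Proof. by rewrite /dstar /c48; field; rewrite gt_eqF ?grav_gt0. Qed.

Lemma UprimeE (d0 : R) :
  Uprime d0 = - (kg / 2) / Num.sqrt (c48 R ^+ 2 + kg * d0).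
Proof. by rewrite /Uprime; congr (- _ / _); field. Qed.

Lemma surrogate_red_cond (eps d0 d v : R) : 0 < eps -> 0 <= d0 ->
  surrogate eps d0 d v -> red_cond d v.
Proof.
move=> eps0 d00 [v_le v_tangent]; split; first by rewrite (le_lt_trans v_le) ?oppr_lt0.
have rad0 : 0 < c48 R ^+ 2 + kg * d0.
  by have := c48_gt0; have := kg_gt0; nra.
rewrite dstarE ler_pdivlMr ?kg_gt0 // mulrC.
move: v_tangent; rewrite UprimeE /U => v_tangent.
apply: (parabola_le_of_tangent kg_gt0 _ _ (ltW eps0) v_tangent).
- by rewrite sqrtr_gt0.
- by rewrite sqr_sqrtr // ltW.
Qed.

Lemma red_cond_F (x : 'cV[R]_6) : red_cond (x 0 0) (x 1 0) -> F x = Red.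
Proof. by case=> v0 d_le; rewrite /F leNgt v0 /= ltNge d_le. Qed.

End Tightness.

Section QuadraticForm.
Variables (R : comPzRingType) (n : nat) (M : 'M[R]_n).

Definition qform (x : 'cV[R]_n) : R := (x^T *m M *m x) 0 0.

Lemma qform_convex_gap (l : R) (x y : 'cV[R]_n) :
  l * qform x + (1 - l) * qform y - qform (l *: x + (1 - l) *: y)
  = l * (1 - l) * qform (x - y).
Proof.
rewrite /qform !linearD /= !linearN /= !linearZ /=.
rewrite !(mulmxDl, mulmxDr, mulNmx, mulmxN) -!(scalemxAl, scalemxAr) !mxE.
by ring.
Qed.

End QuadraticForm.

Lemma posdef_qform_ge0 (R : rcfType) (n : nat) (M : 'M[R]_n) (x : 'cV[R]_n) :
  posdef M -> 0 <= qform M x.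
Proof.
move=> M_pd; have [->|x0] := eqVneq x 0; last exact: ltW (M_pd x x0).
by rewrite /qform trmx0 !mul0mx mxE.
Qed.

Lemma posdef_qform_convex (R : rcfType) (n : nat) (M : 'M[R]_n) (l : R)
    (x y : 'cV[R]_n) :
  posdef M -> 0 <= l <= 1 ->
  qform M (l *: x + (1 - l) *: y) <= l * qform M x + (1 - l) * qform M y.
Proof.
move=> M_pd /andP[l0 l1]; rewrite -subr_ge0 qform_convex_gap.
by rewrite !mulr_ge0 ?posdef_qform_ge0 ?subr_ge0.
Qed.

Lemma inf_norm_convex_le (R : rcfType) (n : nat) (l D : R) (x y : 'cV[R]_n) :
  0 <= l <= 1 -> inf_norm x <= D -> inf_norm y <= D ->
  inf_norm (l *: x + (1 - l) *: y) <= D.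
Proof.
move=> l01 /bigmax_leP[D0 x_le] /bigmax_leP[_ y_le].
apply/bigmax_leP; split=> // j _; rewrite !mxE.
apply: le_trans (ler_normD _ _) _.
have [l0 l1] := andP l01.
rewrite !normrM (ger0_norm l0) (ger0_norm (_ : 0 <= 1 - l)) ?subr_ge0 //.
exact: convex_comb_le (x_le j isT) (y_le j isT).
Qed.

Section AffineCombination.
Variable R : comPzRingType.
Implicit Types l : R.

Lemma addr_convex_comb (V : lmodType R) l (c a b : V) :
  c + (l *: a + (1 - l) *: b) = l *: (c + a) + (1 - l) *: (c + b).
Proof. by rewrite !scalerDr addrACA -scalerDl subrKC scale1r. Qed.

Lemma convex_combD (V : lmodType R) l (a b c d : V) :
  l *: a + (1 - l) *: b + (l *: c + (1 - l) *: d)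
  = l *: (a + c) + (1 - l) *: (b + d).
Proof. by rewrite !scalerDr addrACA. Qed.

Lemma convex_comb_mxE m n l (a b : 'M[R]_(m, n)) i j :
  (l *: a + (1 - l) *: b) i j = l * a i j + (1 - l) * b i j.
Proof. by rewrite !mxE. Qed.

Lemma mulmx_convex_comb m n (M : 'M[R]_(m, n)) l (a b : 'cV[R]_n) :
  M *m (l *: a + (1 - l) *: b) = l *: (M *m a) + (1 - l) *: (M *m b).
Proof. by rewrite mulmxDr -!scalemxAr. Qed.

End AffineCombination.

Section AffineTrajectory.
Variables (R : rcfType) (A : 'M[R]_6) (C : 'M[R]_(8,6)) (H : nat -> 'M[R]_(6,8)).
Variables (x0 : 'cV[R]_6) (y : nat -> 'cV[R]_8) (N : nat).
Implicit Types (u w : 'I_N -> 'cV[R]_8) (l : R).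

Lemma ext_comb (a b : R) u w k :
  ext (fun i => a *: u i + b *: w i) k = a *: ext u k + b *: ext w k.
Proof. by rewrite /ext; case: insub => [i|] //; rewrite !scaler0 addr0. Qed.

Lemma traj_comb l u w k :
  traj A C H x0 y (fun i => l *: u i + (1 - l) *: w i) k =
  l *: traj A C H x0 y u k + (1 - l) *: traj A C H x0 y w k.
Proof.
elim: k => [|k IH] /=; first by rewrite -scalerDl subrKC scale1r.
rewrite IH ext_comb addr_convex_comb !mulmx_convex_comb.
exact: convex_combD.
Qed.

End AffineTrajectory.

Lemma surrogate_convex (R : rcfType) (eps d0 l d1 v1 d2 v2 : R) : 0 <= l <= 1 ->
  surrogate eps d0 d1 v1 -> surrogate eps d0 d2 v2 ->
  surrogate eps d0 (l * d1 + (1 - l) * d2) (l * v1 + (1 - l) * v2).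
Proof.
move=> l01 [v1_le v1_tangent] [v2_le v2_tangent]; split; first exact: convex_comb_le.
have -> : Uprime d0 * (l * d1 + (1 - l) * d2 - d0) + U d0 - eps
        = l * (Uprime d0 * (d1 - d0) + U d0 - eps)
          + (1 - l) * (Uprime d0 * (d2 - d0) + U d0 - eps) by ring.
exact: ler_convex_comb.
Qed.

Lemma surrogate_feasible_convex (R : rcfType) A C H x0 y (Delta : option R) eps d0 N
    (u w : 'I_N -> 'cV[R]_8) (l : R) :
  0 <= l <= 1 ->
  surrogate_feasible A C H x0 y Delta eps d0 u ->
  surrogate_feasible A C H x0 y Delta eps d0 w ->
  surrogate_feasible A C H x0 y Delta eps d0 (fun i => l *: u i + (1 - l) *: w i).
Proof.
move=> l01 u_feas w_feas i yt xt.
have [u_att u_box u_d u_v u_red] := u_feas i.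
have [w_att w_box w_d w_v w_red] := w_feas i.
rewrite {}/yt {}/xt traj_comb addr_convex_comb !convex_comb_mxE; split.
- by move=> j j_radar; rewrite convex_comb_mxE u_att ?w_att // convex_combxx.
- by case: Delta {u_feas w_feas} u_box w_box => // D; apply: inf_norm_convex_le.
- exact: convex_comb_itv.
- exact: convex_comb_itv.
- exact: surrogate_convex.
Qed.

Lemma objective_convex (R : rcfType) N (Rm : 'M[R]_8) (u w : 'I_N -> 'cV[R]_8) (l : R) :
  posdef Rm -> 0 <= l <= 1 ->
  objective Rm (fun i => l *: u i + (1 - l) *: w i)
  <= l * objective Rm u + (1 - l) * objective Rm w.
Proof.
move=> Rm_pd l01; rewrite /objective !mulr_sumr -big_split /=.
by apply: ler_sum => i _; apply: posdef_qform_convex.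
Qed.

Theorem proposition1 (R : rcfType) (eps d0 : R) (heps : 0 < eps) (hd0 : 0 <= d0) :
  (* (i) tightness *)
  (forall d v : R, surrogate eps d0 d v ->
     red_cond d v /\
     (forall x : 'cV[R]_6, x 0 0 = d -> x 1 0 = v -> F x = Red)) /\
  (* (ii) convexity *)
  (forall (A : 'M[R]_6) (C : 'M[R]_(8,6)) (H : nat -> 'M[R]_(6,8))
          (x0 : 'cV[R]_6) (y : nat -> 'cV[R]_8) (Rm : 'M[R]_8)
          (Delta : option R) (N : nat),
     (0 < N)%N -> posdef Rm ->
     (forall D, Delta = Some D -> 0 < D) ->
     convex_problem (@objective R N Rm)
                    (@surrogate_feasible R A C H x0 y Delta eps d0 N)).
Proof.
split=> [d v d_v_surr | A C H x0 y Rm Delta N _ Rm_pd _].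
  have red := surrogate_red_cond heps hd0 d_v_surr.
  by split=> // x x_d x_v; apply: red_cond_F; rewrite x_d x_v.
split=> u w l l01.
- exact: surrogate_feasible_convex.
- exact: objective_convex.
Qed.
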